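(* Let $n\ge1$ be a natural number, let $a,b,\alpha,\beta,\theta$ be variables (with $\beta a-\alpha b\neq0$), and define \[ \Psi_r(n)=\Psi\left(\begin{array}{cc|c} a-\alpha\theta & b-\beta\theta & n \\ \alpha & \beta & r \end{array}\right),\qquad \Phi_r(n)=\Phi\left(\begin{array}{cc|c} a-\alpha\theta & b-\beta\theta & n \\ \alpha & \beta & r \end{array}\right), \] viewed as polynomials in $a,b,\alpha,\beta,\theta$. Then \[ \Psi_r(n)=-\frac{1}{r}\Big(-\frac{\partial}{\partial\theta}\Big)\Psi_{r-1}(n)\ \ (1\le r\le\lfloor n/2\rfloor),\qquad \Phi_r(n)=-\frac{1}{r}\Big(-\frac{\partial}{\partial\theta}\Big)\Phi_{r-1}(n)\ \ (1\le r\le\lfloor (n-1)/2\rfloor). \]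
   Context: $\delta(m)=1$ for $m$ odd, $0$ for $m$ even; $\lfloor\cdot\rfloor$ is the floor. For indeterminates $a,b,\alpha,\beta$ and $n\ge1$, $\Psi\left(\begin{array}{cc|c} a & b & n \\ \alpha & \beta & r \end{array}\right)$ ($0\le r\le\lfloor n/2\rfloor$) and $\Phi\left(\begin{array}{cc|c} a & b & n \\ \alpha & \beta & r \end{array}\right)$ ($0\le r\le\lfloor (n-1)/2\rfloor$) are the unique polynomials in $\mathbb{Z}[a,b,\alpha,\beta]$ such that, identically in $x,y$, $(\beta a-\alpha b)^{\lfloor n/2\rfloor}\frac{x^n+y^n}{(x+y)^{\delta(n)}}=\sum_{r}\Psi\left(\begin{array}{cc|c} a & b & n \\ \alpha & \beta & r \end{array}\right)(\alpha x^2+\beta xy+\alpha y^2)^{\lfloor n/2\rfloor-r}(ax^2+bxy+ay^2)^r$ and $(\beta a-\alpha b)^{\lfloor (n-1)/2\rfloor}\frac{x^n-y^n}{(x-y)(x+y)^{\delta(n-1)}}=\sum_{r}\Phi\left(\begin{array}{cc|c} a & b & n \\ \alpha & \beta & r \end{array}\right)(\alpha x^2+\beta xy+\alpha y^2)^{\lfloor (n-1)/2\rfloor-r}(ax^2+bxy+ay^2)^r$. Substituting $a-\alpha\theta$, $b-\beta\theta$ for $a$, $b$ gives polynomials in $a,b,\alpha,\beta,\theta$. *)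

From HB Require Import structures.
From mathcomp Require Import all_boot all_order all_algebra.
From mathcomp Require Import mpoly.
Set Implicit Arguments. Unset Strict Implicit. Unset Printing Implicit Defensive.
Import GRing.Theory.
Local Open Scope ring_scope.

Definition XV (n k : nat) (R : comNzRingType) : {mpoly R[n.+1]} :=
  'X_(@inord n k).

Definition a6 := XV 5 0 int.
Definition b6 := XV 5 1 int.
Definition al6 := XV 5 2 int.
Definition be6 := XV 5 3 int.
Definition x6 := XV 5 4 int.
Definition y6 := XV 5 5 int.

Definition emb6 (p : {mpoly int[4]}) : {mpoly int[6]} :=
  p \mPo [tuple a6; b6; al6; be6].

Definition qform (c d : {mpoly int[6]}) : {mpoly int[6]} :=
  c * x6 ^+ 2 + d * x6 * y6 + c * y6 ^+ 2.

(* Psi(a b n | alpha beta r), r = 0..floor(n/2), are characterized by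
   (beta a - alpha b)^{floor(n/2)} (x^n+y^n)/(x+y)^{delta(n)}
     = sum_r Psi_r (alpha x^2+beta xy+alpha y^2)^{floor(n/2)-r} (a x^2+bxy+ay^2)^r,
   written here with the denominator cleared (Z[...] is a domain). *)
Definition IsPsi (n : nat) (Psi : nat -> {mpoly int[4]}) : Prop :=
  (be6 * a6 - al6 * b6) ^+ (n./2) * (x6 ^+ n + y6 ^+ n)
  = (x6 + y6) ^+ (odd n) *
    \sum_(r < (n./2).+1)
       emb6 (Psi r) * qform al6 be6 ^+ (n./2 - r) * qform a6 b6 ^+ r.

(* Phi: (beta a - alpha b)^{floor((n-1)/2)} (x^n-y^n)/((x-y)(x+y)^{delta(n-1)})
     = sum_r Phi_r (alpha x^2+...)^{floor((n-1)/2)-r} (a x^2+...)^r. *)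
Definition IsPhi (n : nat) (Phi : nat -> {mpoly int[4]}) : Prop :=
  (be6 * a6 - al6 * b6) ^+ ((n.-1)./2) * (x6 ^+ n - y6 ^+ n)
  = (x6 - y6) * (x6 + y6) ^+ (odd n.-1) *
    \sum_(r < ((n.-1)./2).+1)
       emb6 (Phi r) * qform al6 be6 ^+ ((n.-1)./2 - r) * qform a6 b6 ^+ r.

Definition a5 := XV 4 0 int.
Definition b5 := XV 4 1 int.
Definition al5 := XV 4 2 int.
Definition be5 := XV 4 3 int.
Definition th5 := XV 4 4 int.
Definition theta_idx : 'I_5 := @inord 4 4.

(* substitution a -> a - alpha theta, b -> b - beta theta, viewed with
   rational coefficients (so that the factor 1/r makes sense). *)
Definition subst_theta (p : {mpoly int[4]}) : {mpoly rat[5]} :=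
  map_mpoly (fun z : int => z%:~R)
    (p \mPo [tuple a5 - al5 * th5; b5 - be5 * th5; al5; be5]).

From HB Require Import structures.
From mathcomp Require Import all_boot all_order all_algebra.
From mathcomp Require Import mpoly.
From mathcomp Require Import ring.
Set Implicit Arguments. Unset Strict Implicit. Unset Printing Implicit Defensive.
Import GRing.Theory Num.Theory.
Local Open Scope ring_scope.

(* Let L = alpha d/da + beta d/db.  It kills alpha, beta, x, y and beta a - alpha b, kills
   P = alpha x^2 + beta x y + alpha y^2 and maps Q = a x^2 + b x y + a y^2 to P.  Applying L
   to an identity S * sum_r c_r P^(m-r) Q^r = G with L S = L G = 0 yields an expansion of the
   same shape with coefficients L c_r + (r+1) c_(r+1), which therefore vanish: such expansions
   are unique, because the derivation P_y d/dx - P_x d/dy kills P and the coefficients but not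
   Q, so it lowers the Q-degree of a vanishing expansion.  Hence r c_r = - L c_(r-1), and
   d/dtheta p(a - alpha theta, b - beta theta) = - (L p)(a - alpha theta, b - beta theta). *)

Section BinaryForm.
Variable R : comRingType.
Implicit Types (c d : nat -> R) (P Q : R).

Definition binform c m P Q : R := \sum_(r < m.+1) c r * P ^+ (m - r) * Q ^+ r.

Lemma binformD c d m P Q :
  binform c m P Q + binform d m P Q = binform (fun r => c r + d r) m P Q.
Proof. by rewrite -big_split; apply: eq_bigr => r _; rewrite !mulrDl. Qed.

Lemma mulr_binform c m P Q :
  P * binform c m P Q = binform (fun r => if (r <= m)%N then c r else 0) m.+1 P Q.
Proof.
rewrite /binform [RHS]big_ord_recr /= ltnn !mul0r addr0 mulr_sumr.
apply: eq_bigr => -[r /= lt_rm] _; rewrite ltnS in lt_rm.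
by rewrite lt_rm subSn // exprS !mulrA [P * c r]mulrC.
Qed.

End BinaryForm.

Section Derivation.
Variables (R : comRingType) (D : R -> R).
Hypotheses (derivationD : {morph D : x y / x + y})
  (derivationM : forall p q, D (p * q) = D p * q + p * D q).

Lemma derivation0 : D 0 = 0.
Proof. by apply: (@addrI _ (D 0)); rewrite -derivationD !addr0. Qed.

Lemma derivationMn p l : D (p *+ l) = D p *+ l.
Proof. by elim: l => [|l IHl]; rewrite ?derivation0 // !mulrS derivationD IHl. Qed.

Lemma derivation1 : D 1 = 0.
Proof.
have D11 := derivationM 1 1; rewrite !mulr1 mul1r in D11.
by apply: (@addrI _ (D 1)); rewrite addr0 -D11.
Qed.

Lemma derivationX p l : D (p ^+ l.+1) = p ^+ l * D p *+ l.+1.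
Proof.
elim: l => [|l IHl]; first by rewrite expr1 expr0 mul1r.
by rewrite exprS derivationM IHl mulrnAr mulrA -exprS [D p * _]mulrC -mulrS.
Qed.

Lemma derivationX_eq0 p l : D p = 0 -> D (p ^+ l) = 0.
Proof. by case: l => [|l] Dp; rewrite ?expr0 ?derivation1 // derivationX Dp mulr0 mul0rn. Qed.

Lemma derivation_binform c m P Q : D P = 0 ->
  D (binform c m.+1 P Q)
  = binform (fun r => D (c r)) m.+1 P Q + D Q * binform (fun r => c r.+1 *+ r.+1) m P Q.
Proof.
move=> DP; rewrite /binform (big_morph D derivationD derivation0) mulr_sumr.
rewrite big_ord_recl [X in _ = X + _]big_ord_recl /= expr0 !mulr1.
rewrite derivationM (derivationX_eq0 _ DP) mulr0 addr0 -addrA; congr (_ + _).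
rewrite -big_split; apply: eq_bigr => r _ /=; rewrite /bump leq0n add1n subSS.
rewrite !derivationM (derivationX_eq0 _ DP) mulr0 addr0 derivationX; congr (_ + _).
by rewrite !mulrnAl !mulrnAr; congr (_ *+ _); rewrite mulrA [RHS]mulrC.
Qed.

Lemma derivation_binform_raise c m P Q : D P = 0 -> D Q = P ->
  D (binform c m.+1 P Q)
  = binform (fun r => D (c r) + (if (r <= m)%N then c r.+1 *+ r.+1 else 0)) m.+1 P Q.
Proof. by move=> DP DQ; rewrite derivation_binform // DQ mulr_binform binformD. Qed.

End Derivation.

Section DerivationDomain.
Variables (R : idomainType) (D : R -> R).
Hypotheses (derivationD : {morph D : x y / x + y})
  (derivationM : forall p q, D (p * q) = D p * q + p * D q)
  (charR : has_char0 R).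

Lemma binform_eq0_coef c m P Q : D P = 0 -> D Q != 0 -> P != 0 ->
  (forall r, D (c r) = 0) -> binform c m P Q = 0 -> forall r, (r <= m)%N -> c r = 0.
Proof.
move=> DP DQ P0; elim: m c => [|m IHm] c Dc cPQ r.
  by rewrite leqn0 => /eqP ->; move: cPQ; rewrite /binform big_ord1 !expr0 !mulr1.
have shift0 r' : (r' <= m)%N -> c r'.+1 = 0.
  have Dc0 : binform (fun r => D (c r)) m.+1 P Q = 0.
    by rewrite /binform big1 // => r'' _; rewrite Dc !mul0r.
  have := congr1 D cPQ; rewrite (derivation0 derivationD).
  rewrite (derivation_binform derivationD derivationM) // Dc0 add0r.
  move/eqP; rewrite mulf_eq0 (negbTE DQ) /= => /eqP /IHm shift r'm.
  have Dshift r'' : D (c r''.+1 *+ r''.+1) = 0 by rewrite (derivationMn derivationD) Dc mul0rn.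
  apply/eqP; have /eqP := shift Dshift r' r'm.
  by rewrite -mulr_natr mulf_eq0 (pcharf0P _).1 // orbF.
case: r => [_|r]; last exact: shift0.
move: cPQ; rewrite /binform big_ord_recl big1 => [|r' _]; last first.
  by rewrite lift0 shift0 ?mul0r // -ltnS.
rewrite addr0 expr0 mulr1 subn0 => /eqP; rewrite mulf_eq0 expf_eq0 (negbTE P0) andbF orbF.
by move/eqP.
Qed.

End DerivationDomain.

Section MPolyCalculus.
Variable R : comRingType.

Lemma mpoly_ring_ind n (P : {mpoly R[n]} -> Prop) :
  (forall c, P c%:MP) -> (forall i, P 'X_i) ->
  (forall p q, P p -> P q -> P (p + q)) ->
  (forall p q, P p -> P q -> P (p * q)) -> forall p, P p.
Proof.
move=> PC PX PD PM; elim/mpolyind => [|c m p _ _ Pp]; first by rewrite -mpolyC0.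
apply: (PD) => //; rewrite -mul_mpolyC; apply: (PM) => //.
rewrite mpolyXE_id; apply: (big_ind P) => [|x y|i _]; [by rewrite -mpolyC1 | exact: PM|].
by elim: (m i) => [|k IHk]; [rewrite expr0 -mpolyC1 | rewrite exprS; apply: (PM)].
Qed.

Lemma mderivXU n (i j : 'I_n) : ('X_i : {mpoly R[n]})^`M(j) = (i == j)%:R.
Proof.
rewrite mderivX mnm1E; case: eqP => [->|_]; last by rewrite scale0r.
have -> : (U_(j) - U_(j))%MM = 0%MM by apply/mnmP => k; rewrite mnmBE subnn mnm0E.
by rewrite mpolyX0 scale1r.
Qed.

Lemma mderiv_comp n k (lq : n.-tuple {mpoly R[k]}) (p : {mpoly R[n]}) j :
  (p \mPo lq)^`M(j) = \sum_(i < n) (p^`M(i) \mPo lq) * (tnth lq i)^`M(j).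
Proof.
elim/mpoly_ring_ind: p => [c|i|p q IHp IHq|p q IHp IHq].
- by rewrite comp_mpolyC mderivC big1 // => i _; rewrite mderivC comp_mpoly0 mul0r.
- rewrite comp_mpolyXU -tnth_nth (bigD1 i) //= mderivXU eqxx comp_mpoly1 mul1r.
  by rewrite big1 ?addr0 // => i' /negbTE; rewrite mderivXU eq_sym => ->; rewrite comp_mpoly0 mul0r.
- rewrite raddfD mderivD IHp IHq -big_split /=.
  by apply: eq_bigr => i _; rewrite mderivD raddfD mulrDl.
- rewrite rmorphM mderivM IHp IHq mulr_suml mulr_sumr -big_split /=.
  by apply: eq_bigr => i _; rewrite mderivM raddfD /= !rmorphM /=; ring.
Qed.

Lemma comp_mpolyA n k l (lq : n.-tuple {mpoly R[k]}) (lr : k.-tuple {mpoly R[l]})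
    (p : {mpoly R[n]}) :
  (p \mPo lq) \mPo lr = p \mPo [tuple tnth lq i \mPo lr | i < n].
Proof.
elim/mpoly_ring_ind: p => [c|i|p q IHp IHq|p q IHp IHq].
- by rewrite !comp_mpolyC.
- by rewrite !comp_mpolyXU -!tnth_nth tnth_map tnth_ord_tuple.
- by rewrite !raddfD /= IHp IHq.
- by rewrite !rmorphM /= IHp IHq.
Qed.
End MPolyCalculus.

Lemma mderiv_map_mpoly n (R S : comRingType) (f : {rmorphism R -> S})
    (p : {mpoly R[n]}) j :
  (map_mpoly f p)^`M(j) = map_mpoly f p^`M(j).
Proof.
elim/mpoly_ring_ind: p => [c|i|p q IHp IHq|p q IHp IHq].
- by rewrite map_mpolyC !mderivC rmorph0.
- by rewrite map_mpolyX !mderivXU rmorph_nat.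
- by rewrite !raddfD /= IHp IHq.
- by rewrite !rmorphM /= !mderivM IHp IHq raddfD /= !rmorphM.
Qed.

Lemma has_char0_mpoly n (R : idomainType) : has_char0 R -> has_char0 {mpoly R[n]}.
Proof.
by move/pcharf0P => charR; apply/pcharf0P => k; rewrite -mpolyC_nat mpolyC_eq0 charR.
Qed.

Lemma meval_neq0 n (R : comRingType) (v : 'I_n -> R) (p : {mpoly R[n]}) :
  p.@[v] != 0 -> p != 0.
Proof. by apply: contraNneq => ->; rewrite meval0. Qed.

Section VectorField.
Variables (n : nat) (R : comRingType) (u v : {mpoly R[n]}) (i j : 'I_n).

Definition mvfield (p : {mpoly R[n]}) := u * p^`M(i) + v * p^`M(j).

Lemma mvfield_is_additive : additive mvfield.
Proof. by move=> p q; rewrite /mvfield !mderivB; ring. Qed.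

HB.instance Definition _ :=
  GRing.isAdditive.Build {mpoly R[n]} {mpoly R[n]} mvfield mvfield_is_additive.

Lemma mvfieldM p q : mvfield (p * q) = mvfield p * q + p * mvfield q.
Proof. by rewrite /mvfield !mderivM; ring. Qed.

Lemma mvfieldD : {morph mvfield : p q / p + q}.
Proof. exact: raddfD. Qed.

Lemma mvfieldXU l : mvfield 'X_l = u * (l == i)%:R + v * (l == j)%:R.
Proof. by rewrite /mvfield !mderivXU. Qed.

Lemma mvfield_sum p : mvfield p = \sum_l p^`M(l) * mvfield 'X_l.
Proof.
have pick_coef w (h : 'I_n) : \sum_l p^`M(l) * (w * (l == h)%:R) = w * p^`M(h).
  rewrite (bigD1 h) //= eqxx mulr1 mulrC big1 ?addr0 // => l /negbTE ->.
  by rewrite mulr0 mulr0.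
under eq_bigr => l _ do rewrite mvfieldXU mulrDr.
by rewrite big_split /= !pick_coef.
Qed.

Lemma mvfield_chain k (lq : k.-tuple {mpoly R[n]}) (p : {mpoly R[k]}) :
  mvfield (p \mPo lq) = \sum_l (p^`M(l) \mPo lq) * mvfield (tnth lq l).
Proof.
rewrite /mvfield !mderiv_comp !mulr_sumr -big_split; apply: eq_bigr => l _ /=.
by rewrite mulrDr mulrCA [v * _]mulrCA.
Qed.

End VectorField.

Lemma mvfieldN n (R : comRingType) (u v : {mpoly R[n]}) i j p :
  mvfield (- u) (- v) i j p = - mvfield u v i j p.
Proof. by rewrite /mvfield !mulNr opprD. Qed.

Lemma mvfield_comp n k (R : comRingType) (u v : {mpoly R[k]}) (i j : 'I_k)
    (u' v' : {mpoly R[n]}) (i' j' : 'I_n) (lq : n.-tuple {mpoly R[k]}) (p : {mpoly R[n]}) :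
  (forall l, mvfield u v i j (tnth lq l) = mvfield u' v' i' j' 'X_l \mPo lq) ->
  mvfield u v i j (p \mPo lq) = mvfield u' v' i' j' p \mPo lq.
Proof.
move=> on_lq; rewrite mvfield_chain [in RHS]mvfield_sum raddf_sum /=.
by apply: eq_bigr => l _; rewrite rmorphM /= on_lq.
Qed.

Lemma mderiv_comp_mvfield n k (R : comRingType) (u' v' : {mpoly R[n]}) (i' j' : 'I_n)
    (lq : n.-tuple {mpoly R[k]}) (p : {mpoly R[n]}) j :
  (forall l, (tnth lq l)^`M(j) = mvfield u' v' i' j' 'X_l \mPo lq) ->
  (p \mPo lq)^`M(j) = mvfield u' v' i' j' p \mPo lq.
Proof.
move=> on_lq; rewrite mderiv_comp [in RHS]mvfield_sum raddf_sum /=.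
by apply: eq_bigr => l _; rewrite rmorphM /= on_lq.
Qed.

Lemma mderiv_comp_eq0 n k (R : comRingType) (lq : n.-tuple {mpoly R[k]}) (p : {mpoly R[n]}) j :
  (forall i, (tnth lq i)^`M(j) = 0) -> (p \mPo lq)^`M(j) = 0.
Proof. by move=> lq_j; rewrite mderiv_comp big1 // => i _; rewrite lq_j mulr0. Qed.

Lemma mderivXV n (R : comRingType) k l : (k <= n)%N -> (l <= n)%N ->
  (XV n k R)^`M(inord l) = (k == l)%:R.
Proof. by move=> ? ?; rewrite mderivXU -val_eqE /= !inordK. Qed.

Lemma mevalXV n (R : comRingType) (s : seq R) k : (k <= n)%N ->
  (XV n k R).@[fun i => s`_i] = s`_k.
Proof. by move=> ?; rewrite mevalXU inordK. Qed.

Lemma mvfieldXV n (R : comRingType) (u v : {mpoly R[n.+1]}) i j k :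
  (i <= n)%N -> (j <= n)%N -> (k <= n)%N ->
  mvfield u v (inord i) (inord j) (XV n k R) = u * (k == i)%:R + v * (k == j)%:R.
Proof. by move=> ? ? ?; rewrite /mvfield !mderivXV. Qed.

Lemma mderivXV_neq n (R : comRingType) k l : (k <= n)%N -> (l <= n)%N -> k != l ->
  (XV n k R)^`M(inord l) = 0.
Proof. by move=> ? ? /negbTE neq_kl; rewrite mderivXV ?neq_kl. Qed.

Definition P6 := qform al6 be6.
Definition Q6 := qform a6 b6.
(* [Dab4] and [Dab6] are L on Z[a,b,alpha,beta] and on Z[a,b,alpha,beta,x,y]; [Dxy6] is
   P_y d/dx - P_x d/dy. *)
Notation Dab6 := (mvfield al6 be6 (inord 0) (inord 1)).
Notation Dab4 := (mvfield (XV 3 2 int) (XV 3 3 int) (inord 0) (inord 1)).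
Notation Dxy6 := (mvfield P6^`M(inord 5) (- P6^`M(inord 4)) (inord 4) (inord 5)).

Lemma Dab6_ab : Dab6 a6 = al6 /\ Dab6 b6 = be6.
Proof. by split; rewrite mvfieldXV //= !(mulr0, mulr1, addr0, add0r). Qed.

Lemma Dab6_albe : Dab6 al6 = 0 /\ Dab6 be6 = 0.
Proof. by split; rewrite mvfieldXV //= !(mulr0, addr0). Qed.

Lemma Dab6_xy : Dab6 x6 = 0 /\ Dab6 y6 = 0.
Proof. by split; rewrite mvfieldXV //= !(mulr0, addr0). Qed.

Lemma Dab6_qform c d : Dab6 (qform c d) = qform (Dab6 c) (Dab6 d).
Proof.
have [Dx Dy] := Dab6_xy; have DabM := mvfieldM al6 be6 (inord 0) (inord 1).
by rewrite /qform !raddfD /= !DabM Dx Dy !(mulr0, mul0r, addr0).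
Qed.

Lemma Dab6_P6 : Dab6 P6 = 0.
Proof. by have [Dal Dbe] := Dab6_albe; rewrite Dab6_qform Dal Dbe /qform !mul0r !addr0. Qed.

Lemma Dab6_Q6 : Dab6 Q6 = P6.
Proof. by have [Da Db] := Dab6_ab; rewrite Dab6_qform Da Db. Qed.

Lemma Dab6_disc : Dab6 (be6 * a6 - al6 * b6) = 0.
Proof.
have [Da Db] := Dab6_ab; have [Dal Dbe] := Dab6_albe.
by rewrite raddfB /= !mvfieldM Da Db Dal Dbe !mul0r !add0r mulrC subrr.
Qed.

Lemma Dab6_emb6 q : Dab6 (emb6 q) = emb6 (Dab4 q).
Proof.
apply: mvfield_comp => l; have -> : 'X_l = XV 3 l int by rewrite /XV inord_val.
have l3 : (l <= 3)%N := ltn_ord l.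
rewrite mvfieldXV // (tnth_nth 0) raddfD /= !rmorphM /= !comp_mpolyXU /=.
have [[Da Db] [Dal Dbe]] := (Dab6_ab, Dab6_albe).
case: l l3 => [[|[|[|[|//]]]] ?] _ /=; rewrite !inordK //= ?comp_mpoly1 ?comp_mpoly0.
all: by rewrite ?Da ?Db ?Dal ?Dbe !(mulr0, mulr1, addr0, add0r).
Qed.

Lemma emb6_mderiv_xy q : (emb6 q)^`M(inord 4) = 0 /\ (emb6 q)^`M(inord 5) = 0.
Proof.
by split; apply: mderiv_comp_eq0 => -[[|[|[|[|//]]]] ?]; rewrite (tnth_nth 0) mderivXV_neq.
Qed.

Lemma Dxy6_emb6 q : Dxy6 (emb6 q) = 0.
Proof. by have [xq yq] := emb6_mderiv_xy q; rewrite /mvfield xq yq mulr0 mulr0 addr0. Qed.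

Lemma Dxy6_P6 : Dxy6 P6 = 0.
Proof. by rewrite /mvfield mulNr mulrC subrr. Qed.

Lemma emb6_inj : injective emb6.
Proof.
pose proj : 6.-tuple {mpoly int[4]} :=
  [tuple 'X_(inord 0); 'X_(inord 1); 'X_(inord 2); 'X_(inord 3); 0; 0].
have emb6K : cancel emb6 (comp_mpoly proj).
  move=> p; rewrite /emb6 comp_mpolyA -[RHS]comp_mpoly_id; congr (p \mPo _).
  apply: eq_from_tnth => i; rewrite tnth_map tnth_ord_tuple tnth_mktuple.
  case: i => [[|[|[|[|//]]]] ?]; rewrite (tnth_nth 0) /= /XV comp_mpolyXU inordK //=;
    by congr 'X_(_); apply/val_inj; rewrite /= inordK.
exact: can_inj emb6K.
Qed.

Lemma Dab6_psi_sides n :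
  Dab6 ((x6 + y6) ^+ odd n) = 0 /\
  Dab6 ((be6 * a6 - al6 * b6) ^+ n./2 * (x6 ^+ n + y6 ^+ n)) = 0.
Proof.
have DabM := mvfieldM al6 be6 (inord 0) (inord 1); have [Dx Dy] := Dab6_xy.
have Dxy : Dab6 (x6 + y6) = 0 by rewrite raddfD /= Dx Dy addr0.
split; first by rewrite (derivationX_eq0 DabM _ Dxy).
rewrite DabM (derivationX_eq0 DabM _ Dab6_disc) raddfD /=.
by rewrite (derivationX_eq0 DabM _ Dx) (derivationX_eq0 DabM _ Dy) mul0r addr0 mulr0 addr0.
Qed.

Lemma Dab6_phi_sides n :
  Dab6 ((x6 - y6) * (x6 + y6) ^+ odd n.-1) = 0 /\
  Dab6 ((be6 * a6 - al6 * b6) ^+ (n.-1)./2 * (x6 ^+ n - y6 ^+ n)) = 0.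
Proof.
have DabM := mvfieldM al6 be6 (inord 0) (inord 1); have [Dx Dy] := Dab6_xy.
have Dxy : Dab6 (x6 + y6) = 0 by rewrite raddfD /= Dx Dy addr0.
split; first by rewrite DabM (derivationX_eq0 DabM _ Dxy) raddfB /= Dx Dy subr0 mul0r mulr0 addr0.
rewrite DabM (derivationX_eq0 DabM _ Dab6_disc) raddfB /=.
by rewrite (derivationX_eq0 DabM _ Dx) (derivationX_eq0 DabM _ Dy) mul0r subr0 mulr0 addr0.
Qed.

Lemma P6_neq0 : P6 != 0.
Proof.
apply: (@meval_neq0 _ _ (fun i => [:: 0; 0; 1; 0; 1; 0]`_i)).
by rewrite /P6 /qform !(mevalD, mevalM, rmorphXn) !mevalXV.
Qed.

Lemma Dxy6_Q6_neq0 : Dxy6 Q6 != 0.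
Proof.
apply: (@meval_neq0 _ _ (fun i => [:: 1; 0; 0; 1; 1; 0]`_i)).
rewrite /mvfield /P6 /Q6 /qform !expr2 !(mderivD, mderivM, mderivN) !mderivXV //.
by rewrite !(mevalD, mevalM, mevalN, rmorph_nat) !mevalXV.
Qed.

Lemma xy_pow_neq0 k : (x6 + y6) ^+ k != 0.
Proof.
apply: (@meval_neq0 _ _ (fun i => [:: 0; 0; 0; 0; 1; 0]`_i)).
by rewrite rmorphXn rmorphD /= !mevalXV // addr0 expr1n.
Qed.

Lemma xy_diff_pow_neq0 k : (x6 - y6) * (x6 + y6) ^+ k != 0.
Proof.
apply: (@meval_neq0 _ _ (fun i => [:: 0; 0; 0; 0; 1; 0]`_i)).
by rewrite rmorphM rmorphXn rmorphB rmorphD /= !mevalXV //= ?subr0 ?addr0 expr1n mulr1.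
Qed.

Lemma mderiv_subst_theta p : (subst_theta p)^`M(theta_idx) = subst_theta (- Dab4 p).
Proof.
rewrite /subst_theta mderiv_map_mpoly -mvfieldN; congr (map_mpoly _ _).
apply: mderiv_comp_mvfield => l; have -> : 'X_l = XV 3 l int by rewrite /XV inord_val.
have l3 : (l <= 3)%N := ltn_ord l.
rewrite mvfieldXV // (tnth_nth 0) raddfD /= !rmorphM /= !raddfN /= !comp_mpolyXU /=.
case: l l3 => [[|[|[|[|//]]]] ?] _ /=; rewrite !inordK //= ?comp_mpoly1 ?comp_mpoly0.
all: by rewrite ?mderivB ?mderivM !mderivXV //= !(mul0r, mulr0, mulr1, add0r, addr0).
Qed.

Lemma Dab6_binform_emb6 c m :
  Dab6 (binform (fun r => emb6 (c r)) m.+1 P6 Q6)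
  = binform (fun r => emb6 (Dab4 (c r) + (if (r <= m)%N then c r.+1 *+ r.+1 else 0))) m.+1 P6 Q6.
Proof.
rewrite (derivation_binform_raise (mvfieldD _ _ _ _) (mvfieldM _ _ _ _) _ _ Dab6_P6 Dab6_Q6).
apply: eq_bigr => r _; congr (_ * _ * _); rewrite Dab6_emb6 [RHS]raddfD /=; congr (_ + _).
by case: ifP; rewrite ?raddfMn ?raddf0.
Qed.

Lemma binform_emb6_eq0 c m :
  binform (fun r => emb6 (c r)) m P6 Q6 = 0 -> forall r, (r <= m)%N -> c r = 0.
Proof.
move=> cPQ r r_le_m; apply: emb6_inj; rewrite {2}/emb6 comp_mpoly0.
exact: binform_eq0_coef (mvfieldD _ _ _ _) (mvfieldM _ _ _ _) (has_char0_mpoly 6 (pchar_num int))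
  _ _ _ _ Dxy6_P6 Dxy6_Q6_neq0 P6_neq0 (fun r => Dxy6_emb6 (c r)) cPQ r r_le_m.
Qed.

Lemma coef_recursion m (S G : {mpoly int[6]}) (Psi : nat -> {mpoly int[4]}) :
  S != 0 -> Dab6 S = 0 -> Dab6 G = 0 ->
  G = S * binform (fun r => emb6 (Psi r)) m P6 Q6 ->
  forall r, (1 <= r <= m)%N -> Psi r *+ r = - Dab4 (Psi r.-1).
Proof.
move=> S0 DS DG defG r /andP [r_gt0 r_le_m].
case: m defG r_le_m => [|m] defG r_le_m; first by case: r r_gt0 r_le_m.
have r_pred : (r.-1 <= m)%N by rewrite -ltnS prednK.
have := congr1 Dab6 defG; rewrite DG mvfieldM DS mul0r add0r Dab6_binform_emb6.
move/esym/eqP; rewrite mulf_eq0 (negbTE S0) => /eqP /binform_emb6_eq0.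
move/(_ r.-1 (leq_trans (leq_pred r) r_le_m)); rewrite r_pred prednK //.
by move/eqP; rewrite addrC addr_eq0 => /eqP.
Qed.

Lemma subst_theta_recursion (X : nat -> {mpoly int[4]}) r : (0 < r)%N ->
  X r *+ r = - Dab4 (X r.-1) ->
  subst_theta (X r) = - (r%:R)^-1 *: (- (subst_theta (X r.-1))^`M(theta_idx)).
Proof.
move=> r_gt0 Xr; rewrite mderiv_subst_theta -Xr /subst_theta comp_mpolyMn rmorphMn /=.
rewrite scaleNr scalerN opprK -scaler_nat scalerA mulVf ?scale1r //.
by rewrite pnatr_eq0 -lt0n.
Qed.

Theorem corollary8p3 (n : nat) (hn : (1 <= n)%N)
    (Psi Phi : nat -> {mpoly int[4]}) :
  (IsPsi n Psi ->
   forall r : nat, (1 <= r <= n./2)%N ->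
     subst_theta (Psi r)
     = - (r%:R)^-1 *: (- (subst_theta (Psi r.-1))^`M(theta_idx)))
  /\
  (IsPhi n Phi ->
   forall r : nat, (1 <= r <= (n.-1)./2)%N ->
     subst_theta (Phi r)
     = - (r%:R)^-1 *: (- (subst_theta (Phi r.-1))^`M(theta_idx))).
Proof.
have [DS_psi DG_psi] := Dab6_psi_sides n; have [DS_phi DG_phi] := Dab6_phi_sides n.
split=> [defPsi | defPhi] r r_range; apply: subst_theta_recursion; try by case/andP: r_range.
- exact: coef_recursion (xy_pow_neq0 _) DS_psi DG_psi defPsi r r_range.
- exact: coef_recursion (xy_diff_pow_neq0 _) DS_phi DG_phi defPhi r r_range.
Qed.
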